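(* Let $R$ be a noetherian integral domain, $n\ge1$, and $R[n]=R[t]/(t^n)$. Let $p\ge1$ and, for $1\le i\le p$, let $x_i=\sum_{j=0}^{n-1}x_{i,j}t^j\in R[n]$ with $x_{i,j}\in R$. Let $I$ be the ideal of $R[n]$ generated by $x_1,\ldots,x_p$ and $I_0$ the ideal of $R$ generated by $x_{1,0},\ldots,x_{p,0}$. Then: (i) $(x_1,\ldots,x_p)$ is a regular sequence in $R[n]$ if and only if $(x_{1,0},\ldots,x_{p,0})$ is a regular sequence in $R$; (ii) if $(x_1,\ldots,x_p)$ is a regular sequence in $R[n]$, then for every $y\in R$, $t^{n-1}y\in I$ if and only if $y\in I_0$. *)

From HB Require Import structures.
From mathcomp Require Import all_boot all_order all_algebra.
Set Implicit Arguments. Unset Strict Implicit. Unset Printing Implicit Defensive.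
Import GRing.Theory.
Local Open Scope ring_scope.

Definition ideal_gen (A : comNzRingType) (s : seq A) (y : A) : Prop :=
  exists c : seq A, y = \sum_(i < size s) c`_i * s`_i.

Definition is_ideal (A : comNzRingType) (I : A -> Prop) : Prop :=
  [/\ I 0, (forall x y, I x -> I y -> I (x + y)) & (forall a x, I x -> I (a * x))].

Definition noetherian (A : comNzRingType) : Prop :=
  forall I : A -> Prop, is_ideal I ->
    exists s : seq A, forall y, I y <-> ideal_gen s y.

(* (s_0, ..., s_{p-1}) is a regular sequence in A (as an A-module):
   each s_k is a nonzerodivisor on A/(s_0,...,s_{k-1}), and A/(s) <> 0. *)
Definition regular_seq (A : comNzRingType) (s : seq A) : Prop :=
  (forall k : nat, (k < size s)%N -> forall a : A,
      ideal_gen (take k s) (a * s`_k) -> ideal_gen (take k s) a)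
  /\ ~ ideal_gen s 1.

(* R[n] = R[t]/(t^n), realised as MathComp's quotient polynomial ring
   {poly %/ 'X^n} (which is R[t]/(t^n) whenever n >= 1). *)
Definition Rn (R : comNzRingType) (n : nat) := {poly %/ ('X^n : {poly R})}.

Definition toRn (R : comNzRingType) (n : nat) (q : {poly R}) : Rn R n :=
  in_qpoly ('X^n : {poly R}) q.

From mathcomp Require Import all_boot all_order all_algebra.
From mathcomp Require Import ring.
Import GRing.Theory.
Set Implicit Arguments. Unset Strict Implicit.
Local Open Scope ring_scope.

(* Ideals of R[t]/(t^n) generated by images of f_1, ..., f_p correspond to
   the ideals (t^n, f_1, ..., f_k) of R[t], and evaluation at t = 0 maps
   these onto (f_1(0), ..., f_k(0)); conversely, every g with g(0) in that
   ideal is congruent modulo t to an element of (f_1, ..., f_k).  If the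
   f_i(0) form a weakly regular sequence, this lets one cancel a factor t:
   t a in (t^(m+1), f_<k) implies a in (t^m, f_<k), by induction on k; then
   induction on m shows that f_k is a nonzerodivisor modulo (t^m, f_<k).
   Conversely, y f_k(0) in (f_<k(0)) gives t^(n-1) y f_k in (t^n, f_<k), and
   cancelling f_k and then t^(n-1) gives y in (f_<k(0)). *)

Section IdealGen.
Variable A : comNzRingType.
Implicit Types (s t : seq A) (a b u z : A).

Lemma ideal_gen_nil a : ideal_gen [::] a <-> a = 0.
Proof.
by split=> [[c ->] | ->]; [rewrite big_ord0 | exists [::]; rewrite big_ord0].
Qed.

Lemma ideal_gen_cons z s a :
  ideal_gen (z :: s) a <-> exists u, ideal_gen s (a - u * z).
Proof.
rewrite /ideal_gen; split=> [[c ->] | [u [c Ec]]].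
  exists c`_0, (behead c); rewrite big_ord_recl addrAC subrr add0r.
  by apply: eq_bigr => i _; rewrite lift0 nth_behead.
exists (u :: c); rewrite big_ord_recl -[a](subrK (u * z)) Ec addrC.
by congr (_ + _); apply: eq_bigr => i _; rewrite lift0.
Qed.

Lemma ideal_gen0 s : ideal_gen s 0.
Proof.
elim: s => [|z s IHs]; first exact/ideal_gen_nil.
by apply/ideal_gen_cons; exists 0; rewrite mul0r subrr.
Qed.

Lemma ideal_genD s a b : ideal_gen s a -> ideal_gen s b -> ideal_gen s (a + b).
Proof.
elim: s a b => [|z s IHs] a b.
  by move=> /ideal_gen_nil-> /ideal_gen_nil->; apply/ideal_gen_nil; rewrite addr0.
move=> /ideal_gen_cons[u Ha] /ideal_gen_cons[v Hb]; apply/ideal_gen_cons.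
exists (u + v); have -> : a + b - (u + v) * z = (a - u * z) + (b - v * z) by ring.
exact: IHs.
Qed.

Lemma ideal_genMl s u a : ideal_gen s a -> ideal_gen s (u * a).
Proof.
elim: s a => [|z s IHs] a.
  by move=> /ideal_gen_nil->; rewrite mulr0; exact: ideal_gen0.
move=> /ideal_gen_cons[v Ha]; apply/ideal_gen_cons; exists (u * v).
by rewrite -mulrA -mulrBr; exact: IHs.
Qed.

Lemma ideal_gen_mem s z : z \in s -> ideal_gen s z.
Proof.
elim: s => [|w s IHs] //; rewrite in_cons => /predU1P[-> | zs]; apply/ideal_gen_cons.
  by exists 1; rewrite mul1r subrr; exact: ideal_gen0.
by exists 0; rewrite mul0r subr0; exact: IHs.
Qed.

Lemma ideal_gen_sub s t a : {subset s <= t} -> ideal_gen s a -> ideal_gen t a.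
Proof.
elim: s a => [|z s IHs] a sub_st; first by move=> /ideal_gen_nil->; exact: ideal_gen0.
move=> /ideal_gen_cons[u Ha]; rewrite -(subrK (u * z) a).
apply: ideal_genD; last by apply/ideal_genMl/ideal_gen_mem/sub_st/mem_head.
by apply: IHs Ha => w ws; apply/sub_st/mem_behead.
Qed.

Lemma ideal_gen_consW s z a : ideal_gen s a -> ideal_gen (z :: s) a.
Proof. by apply: ideal_gen_sub => w ws; rewrite in_cons ws orbT. Qed.

Lemma ideal_gen_perm s t a : perm_eq s t -> ideal_gen s a <-> ideal_gen t a.
Proof.
by move=> /perm_mem eq_st; split; apply: ideal_gen_sub => w; rewrite eq_st.
Qed.

Lemma ideal_gen_rcons s z a :
  ideal_gen (rcons s z) a <-> exists u, ideal_gen s (a - u * z).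
Proof.
have /ideal_gen_perm-> : perm_eq (rcons s z) (z :: s) by rewrite perm_rcons.
exact: ideal_gen_cons.
Qed.

Definition nzd_mod s z := forall a, ideal_gen s (a * z) -> ideal_gen s a.

Definition weakly_regular s := forall k, (k < size s)%N -> nzd_mod (take k s) s`_k.

Lemma regular_seqE s : regular_seq s <-> weakly_regular s /\ ~ ideal_gen s 1.
Proof. exact: iff_refl. Qed.

Lemma weakly_regular_nil : weakly_regular [::].
Proof. by move=> k; rewrite ltn0. Qed.

Lemma weakly_regular_rcons s z :
  weakly_regular (rcons s z) <-> weakly_regular s /\ nzd_mod s z.
Proof.
have take_s k : (k <= size s)%N -> take k (rcons s z) = take k s.
  by move=> ks; rewrite -cats1 takel_cat.
have nth_s k : (k < size s)%N -> (rcons s z)`_k = s`_k.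
  by move=> ks; rewrite nth_rcons ks.
have nth_z : (rcons s z)`_(size s) = z by rewrite nth_rcons ltnn eqxx.
split=> [reg | [reg nzd] k].
  split=> [k ks | ].
    rewrite -(take_s k (ltnW ks)) -(nth_s k ks); apply: (reg _).
    by rewrite size_rcons ltnS ltnW.
  rewrite -{1}(take_size s) -(take_s _ (leqnn _)) -[X in nzd_mod _ X]nth_z.
  apply: (reg _).
  by rewrite size_rcons.
rewrite size_rcons ltnS leq_eqVlt => /predU1P[-> | ks].
  by rewrite take_s ?leqnn // take_size nth_z.
by rewrite take_s ?(ltnW ks) // (nth_s k ks); exact: reg.
Qed.

Lemma weakly_regular1 z : GRing.rreg z -> weakly_regular [:: z].
Proof.
move=> z_reg; apply/(weakly_regular_rcons [::]).
split=> [|a]; first exact: weakly_regular_nil.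
by move=> /ideal_gen_nil az0; apply/ideal_gen_nil/eqP; rewrite -(mulIr_eq0 _ z_reg) az0.
Qed.

End IdealGen.

Lemma ideal_gen_map (A B : comNzRingType) (f : {rmorphism A -> B}) (s : seq A) (a : A) :
  ideal_gen s a -> ideal_gen (map f s) (f a).
Proof.
elim: s a => [|z s IHs] a.
 by move=> /ideal_gen_nil->; rewrite rmorph0; exact: ideal_gen0.
move=> /ideal_gen_cons[u Ha]; apply/ideal_gen_cons; exists (f u).
by rewrite -rmorphM -rmorphB; exact: IHs.
Qed.

Section TruncatedPolynomials.
Variables (R : comNzRingType) (n : nat).
Hypothesis n_gt0 : (0 < n)%N.
Implicit Types (s : seq {poly R}) (a z : {poly R}).

Lemma toRn_val (a : Rn R n) : toRn n (val a) = a.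
Proof. by apply: val_inj; apply: in_qpoly_small; exact: size_mk_monic. Qed.

Lemma toRn_eq0 a : toRn n a = 0 <-> ideal_gen [:: 'X^n] a.
Proof.
have mk_Xn : mk_monic ('X^n : {poly R}) = 'X^n by rewrite mk_monic_Xn prednK.
rewrite ideal_gen_cons; split=> [/(congr1 val) /= | [e /ideal_gen_nil/eqP]].
  rewrite mk_Xn => a_mod; exists (Pdiv.CommonRing.rdivp a 'X^n); apply/ideal_gen_nil.
  by rewrite {1}(Pdiv.RingMonic.rdivp_eq (monicXn R n) a) a_mod addr0 subrr.
rewrite subr_eq0 => /eqP->; apply: val_inj => /=.
by rewrite mk_Xn Pdiv.RingMonic.rmodp_mull ?monicXn.
Qed.

Lemma toRn_ideal_gen s a :
  ideal_gen (map (toRn n) s) (toRn n a) <-> ideal_gen ('X^n :: s) a.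
Proof.
elim: s a => [|z s IHs] a; first by rewrite ideal_gen_nil toRn_eq0.
have swap : perm_eq ('X^n :: z :: s) (z :: 'X^n :: s).
  by apply/permP => P /=; rewrite addnCA.
rewrite (ideal_gen_perm _ swap) !ideal_gen_cons; split=> [[u] | [v]].
  by rewrite -(toRn_val u) -!rmorphM -rmorphB IHs; exists (val u).
by move=> Hv; exists (toRn n v); rewrite -rmorphM -rmorphB; exact/IHs.
Qed.

Lemma toRn_nzd_mod s z : nzd_mod (map (toRn n) s) (toRn n z) <-> nzd_mod ('X^n :: s) z.
Proof.
split=> nzd a.
  by move=> /toRn_ideal_gen az; apply/toRn_ideal_gen/nzd; rewrite -rmorphM.
by rewrite -(toRn_val a) -rmorphM !toRn_ideal_gen; exact: nzd.
Qed.

Lemma toRn_weakly_regular s :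
  weakly_regular (map (toRn n) s) <-> weakly_regular ('X^n :: s).
Proof.
elim/last_ind: s => [|s z IHs].
  by split=> _; [exact/weakly_regular1/monic_rreg/monicXn | exact: weakly_regular_nil].
by rewrite map_rcons -rcons_cons !weakly_regular_rcons IHs toRn_nzd_mod.
Qed.

Lemma toRn_regular_seq s : regular_seq (map (toRn n) s) <-> regular_seq ('X^n :: s).
Proof.
by rewrite !regular_seqE toRn_weakly_regular -(rmorph1 (toRn n)) toRn_ideal_gen.
Qed.

End TruncatedPolynomials.

Section ConstantTerms.
Variable R : comNzRingType.
Implicit Types (s : seq {poly R}) (a g z : {poly R}).

Local Notation at0 s := (map (horner_eval 0) s).

Lemma ideal_gen_horner0 m s a : ideal_gen ('X^(m.+1) :: s) a -> ideal_gen (at0 s) a.[0].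
Proof.
move=> /(ideal_gen_map (horner_eval 0)) /ideal_gen_cons[u].
by rewrite /= !horner_evalE hornerXn expr0n mulr0 subr0.
Qed.

Lemma ideal_gen_lift0 s g : ideal_gen (at0 s) g.[0] -> exists e, ideal_gen s (g - e * 'X).
Proof.
elim: s g => [|z s IHs] g.
  move=> /ideal_gen_nil g0; have /factor_theorem[e ->] : root g 0 by exact/eqP.
  by exists e; rewrite polyC0 subr0 subrr; exact: ideal_gen0.
move=> /ideal_gen_cons[u]; rewrite horner_evalE => Hu.
have [e He] : exists e, ideal_gen s (g - u%:P * z - e * 'X).
  by apply: IHs; rewrite hornerD hornerN hornerM hornerC.
by exists e; apply/ideal_gen_cons; exists u%:P; rewrite addrAC.
Qed.

Lemma ideal_gen_mulX m s a :
  ideal_gen ('X^m :: s) a -> ideal_gen ('X^(m.+1) :: s) ('X * a).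
Proof.
move=> /ideal_gen_cons[u Ha]; apply/ideal_gen_cons; exists u.
by rewrite exprS mulrCA -mulrBr; exact: ideal_genMl.
Qed.

Lemma ideal_gen_divX s m a : weakly_regular (at0 s) ->
  ideal_gen ('X^(m.+1) :: s) ('X * a) -> ideal_gen ('X^m :: s) a.
Proof.
elim/last_ind: s m a => [|s z IHs] m a.
  move=> _ /ideal_gen_cons[u /ideal_gen_nil Xa]; apply/ideal_gen_cons; exists u.
  apply/ideal_gen_nil/(monic_rreg (monicX R)); rewrite mul0r -Xa exprSr; ring.
rewrite map_rcons weakly_regular_rcons => -[reg0 nzd0].
rewrite -!rcons_cons !ideal_gen_rcons => -[v Hv].
have /nzd0 : ideal_gen (at0 s) (v.[0] * horner_eval 0 z).
  have := ideal_gen_horner0 Hv.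
  rewrite hornerD hornerN hornerM hornerX mul0r add0r hornerM horner_evalE.
  by move=> /(ideal_genMl (-1)); rewrite mulN1r opprK.
move=> /ideal_gen_lift0[e He]; exists e; apply: IHs reg0 _.
have -> : 'X * (a - e * z) = ('X * a - v * z) + z * (v - e * 'X) by ring.
by apply: ideal_genD Hv _; apply/ideal_genMl/ideal_gen_consW.
Qed.

Lemma ideal_gen_divXn s j m a : weakly_regular (at0 s) ->
  ideal_gen ('X^(j + m) :: s) ('X^j * a) -> ideal_gen ('X^m :: s) a.
Proof.
move=> reg0; elim: j m a => [|j IHj] m a; first by rewrite expr0 mul1r.
by rewrite exprSr -mulrA addSnnS => /IHj /(ideal_gen_divX reg0).
Qed.

Lemma nzd_mod_lift s z m : weakly_regular (at0 s) -> nzd_mod (at0 s) (horner_eval 0 z) ->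
  nzd_mod ('X^m :: s) z.
Proof.
move=> reg0 nzd0; elim: m => [|m IHm] a Haz.
  by apply/ideal_gen_cons; exists a; rewrite expr0 mulr1 subrr; exact: ideal_gen0.
have /nzd0 : ideal_gen (at0 s) (a.[0] * horner_eval 0 z).
  by rewrite horner_evalE -hornerM; exact: ideal_gen_horner0 Haz.
move=> /ideal_gen_lift0[f Hf].
have : ideal_gen ('X^(m.+1) :: s) ('X * (f * z)).
  have -> : 'X * (f * z) = a * z + (- z) * (a - f * 'X) by ring.
  by apply: ideal_genD Haz _; apply/ideal_genMl/ideal_gen_consW.
move=> /(ideal_gen_divX reg0) /IHm Hfm.
have -> : a = (a - f * 'X) + 'X * f by ring.
exact: ideal_genD (ideal_gen_consW _ Hf) (ideal_gen_mulX Hfm).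
Qed.

Variable n : nat.
Hypothesis n_gt0 : (0 < n)%N.

Lemma ideal_gen_XnpredM s g :
  ideal_gen (at0 s) g.[0] -> ideal_gen ('X^n :: s) ('X^(n.-1) * g).
Proof.
move=> /ideal_gen_lift0[e He]; apply/ideal_gen_cons; exists e.
have -> : 'X^(n.-1) * g - e * 'X^n = 'X^(n.-1) * (g - e * 'X).
  by rewrite -{2}(prednK n_gt0) exprSr; ring.
exact: ideal_genMl.
Qed.

Lemma ideal_gen_XnpredMC s y : weakly_regular (at0 s) ->
  ideal_gen ('X^n :: s) ('X^(n.-1) * y%:P) <-> ideal_gen (at0 s) y.
Proof.
move=> reg0; split=> [|Hy]; last by apply: ideal_gen_XnpredM; rewrite hornerC.
rewrite -{1}(prednK n_gt0) -addn1 => /(ideal_gen_divXn reg0) /ideal_gen_horner0.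
by rewrite hornerC.
Qed.

Lemma nzd_mod_horner0 s z : weakly_regular (at0 s) -> nzd_mod ('X^n :: s) z ->
  nzd_mod (at0 s) (horner_eval 0 z).
Proof.
move=> reg0 nzd y Hy; apply/(ideal_gen_XnpredMC _ reg0)/nzd.
by rewrite -mulrA; apply: ideal_gen_XnpredM; rewrite hornerM hornerC -horner_evalE.
Qed.

Lemma weakly_regular_Xn_cons s :
  weakly_regular ('X^n :: s) <-> weakly_regular (at0 s).
Proof.
elim/last_ind: s => [|s z IHs].
  by split=> _; [exact: weakly_regular_nil | exact/weakly_regular1/monic_rreg/monicXn].
rewrite -rcons_cons map_rcons !weakly_regular_rcons IHs.
split=> -[reg0 nzd]; split=> //; first exact: nzd_mod_horner0.
exact: nzd_mod_lift.
Qed.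

Lemma ideal_gen1_Xn_cons s : ideal_gen ('X^n :: s) 1 <-> ideal_gen (at0 s) 1.
Proof.
split=> [|H1].
  by rewrite -(prednK n_gt0) => /ideal_gen_horner0; rewrite -polyC1 hornerC.
have [e He] : exists e, ideal_gen s (1 - e * 'X).
  by apply: ideal_gen_lift0; rewrite -polyC1 hornerC.
apply/ideal_gen_cons; exists (e ^+ n).
have -> : 1 - e ^+ n * 'X^n = (\sum_(i < n) (e * 'X) ^+ i) * (1 - e * 'X).
  by rewrite -exprMn -opprB subrX1 -mulNr opprB mulrC.
exact: ideal_genMl.
Qed.

Lemma regular_seq_Xn_cons s : regular_seq ('X^n :: s) <-> regular_seq (at0 s).
Proof. by rewrite !regular_seqE weakly_regular_Xn_cons ideal_gen1_Xn_cons. Qed.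

End ConstantTerms.

Theorem proposition3p7p1 (R : idomainType) (n p : nat) (x : nat -> nat -> R) :
  noetherian R -> (0 < n)%N -> (0 < p)%N ->
  let xs : seq (Rn R n) :=
    [seq toRn n (\sum_(j < n) x i j *: 'X^j) | i <- iota 0 p] in
  let x0s : seq R := [seq x i 0%N | i <- iota 0 p] in
  (regular_seq xs <-> regular_seq x0s) /\
  (regular_seq xs -> forall y : R,
     ideal_gen xs (toRn n 'X ^+ n.-1 * toRn n y%:P) <-> ideal_gen x0s y).
Proof.
move=> _ n_gt0 _ xs x0s.
pose fs := [seq \sum_(j < n) x i j *: 'X^j | i <- iota 0 p].
have -> : xs = map (toRn n) fs by rewrite -map_comp.
have -> : x0s = map (horner_eval 0) fs.
  rewrite -map_comp; apply: eq_map => i /=.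
  by rewrite horner_evalE -poly_def horner_coef0 coef_poly n_gt0.
have reg_iff := iff_trans (toRn_regular_seq n_gt0 fs) (regular_seq_Xn_cons n_gt0 fs).
split=> // /reg_iff[reg0 _] y; rewrite -rmorphXn -rmorphM.
exact: iff_trans (toRn_ideal_gen n_gt0 _ _) (ideal_gen_XnpredMC n_gt0 y reg0).
Qed.
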